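(* Let $G=(V,E)$ be the path (chain) graph with $V=\{1,\dots,n\}$, $n\ge 2$, and $E=\{\{i,i+1\}: i=1,\dots,n-1\}$. Let $c\in\mathbb{R}^n$ have strictly positive components and $\rho>0$. For $k=1,\dots,n$ define $s_k=\sum_{1\le i\le k,\ i\equiv k \pmod 2}c_i^2$ (so $s_1=c_1^2$, $s_2=c_2^2$, $s_3=c_1^2+c_3^2$, $s_4=c_2^2+c_4^2$, ...). Then there exist strictly positive edge weights such that the weighted adjacency matrix $A$ satisfies $Ac=\rho c$ if and only if $$s_1<s_2<\dots<s_{n-1}\quad\text{and}\quad s_{n-1}=s_n,$$ i.e. $c_1^2<c_2^2<c_1^2+c_3^2<c_2^2+c_4^2<\dots<\sum_{i \text{ odd}}c_i^2=\sum_{i\text{ even}}c_i^2$.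
   Context: For positive edge weights $w_{ij}=w_{ji}$ ($\{i,j\}\in E$), the weighted adjacency matrix $A$ has $a_{ij}=w_{ij}$ if $\{i,j\}\in E$ and $a_{ij}=0$ otherwise. *)

From mathcomp Require Import all_boot all_order all_algebra.
Set Implicit Arguments. Unset Strict Implicit. Unset Printing Implicit Defensive.
Import Order.TTheory GRing.Theory Num.Theory.
Local Open Scope ring_scope.

(* Path graph on vertices 'I_n (0-based: vertex i here is vertex i+1 of the
   paper), edges {i, i+1}.  Edge weights are given by w : nat -> R, where
   w i is the weight of the edge {i, i+1} (only i < n-1 is relevant). *)
Definition path_edge (n : nat) (i j : 'I_n) : bool :=
  (i.+1 == j :> nat) || (j.+1 == i :> nat).

Definition path_adj (R : ringType) (n : nat) (w : nat -> R) : 'M[R]_n :=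
  \matrix_(i < n, j < n) (if path_edge i j then w (minn i j) else 0).

Definition alt_sq (R : ringType) (n : nat) (c : 'cV[R]_n) (k : nat) : R :=
  \sum_(i < n | (i <= k)%N && (odd i == odd k)) c i 0 ^+ 2.

From mathcomp Require Import all_boot all_order all_algebra.
From mathcomp Require Import zify.

(* Multiplying row i of [A c = rho c] by [c_i] turns the eigenvector equation
   into a balance law [F_(i-1) + F_i = rho c_i^2] for the edge fluxes
   [F_i = w_i c_i c_(i+1)], with no flux beyond the two ends of the path.
   Starting from the first vertex this recursion has the unique solution
   [F_i = rho (s_i - s_(i-1))], and the balance at the last vertex then says
   [s_(n-1) = s_n].  So positive weights force the [s_k] to increase strictly,
   and conversely [w_i := rho (s_i - s_(i-1)) / (c_i c_(i+1))] is a solution. *)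
Import Order.TTheory GRing.Theory Num.Theory.
Set Implicit Arguments.
Unset Strict Implicit.
Unset Printing Implicit Defensive.
Local Open Scope ring_scope.

Lemma path_edgeE n (i j : 'I_n) :
  path_edge i j = (val j == i.+1) || (0 < i)%N && (val j == i.-1).
Proof. by rewrite /path_edge eq_sym; case: (nat_of_ord i) => [|k]. Qed.

Lemma sum_if_val_eq (V : nmodType) n (F : 'I_n.+1 -> V) k :
  \sum_(j < n.+1) (if val j == k then F j else 0) =
  if (k < n.+1)%N then F (inord k) else 0.
Proof.
case: ifP => hk; last first.
  by apply: big1 => j _; case: eqP => // jk; move: (ltn_ord j); rewrite jk hk.
rewrite (bigD1 (inord k)) /= ?inordK ?eqxx // big1 ?addr0 // => j.
by case: (val j =P k) => // <-; rewrite inord_val eqxx.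
Qed.

Section PathAdjacency.
Variables (R : comNzRingType) (n : nat) (w : nat -> R) (c : 'cV[R]_n.+1).
Local Notation cv k := (c (inord k) 0).

Lemma mulmx_path_adj (i : 'I_n.+1) :
  (path_adj n.+1 w *m c) i 0 =
  (if (0 < i)%N then w i.-1 * cv i.-1 else 0) +
  (if (i < n)%N then w i * cv i.+1 else 0).
Proof.
have entry j : (if path_edge i j then w (minn i j) else 0) * c j 0 =
    (if val j == i.+1 then w i * c j 0 else 0) +
    (if (0 < i)%N then (if val j == i.-1 then w i.-1 * c j 0 else 0) else 0).
  rewrite path_edgeE; case: (val j =P i.+1) => [ji | _] /=.
    rewrite ji; have -> : (i.+1 == i.-1) = false by lia.
    by rewrite (minn_idPl (leqnSn i)) if_same addr0.
  case: (posnP i) => [-> | i_gt0]; first by rewrite mul0r addr0.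
  by case: (val j =P i.-1) => [-> | _]; rewrite ?mul0r ?add0r // (minn_idPr _) //; lia.
rewrite mxE; under eq_bigr => j _ do rewrite mxE entry.
rewrite big_split /= sum_if_val_eq addrC; congr (_ + _).
  case: (posnP i) => [_ | _]; first by rewrite big1.
  by rewrite sum_if_val_eq (leq_ltn_trans (leq_pred i) (ltn_ord i)).
Qed.

Definition edge_flux k := w k * cv k * cv k.+1.

Lemma mulmx_path_adj_mul k : (k < n.+1)%N ->
  (path_adj n.+1 w *m c) (inord k) 0 * cv k =
  (if (0 < k)%N then edge_flux k.-1 else 0) + (if (k < n)%N then edge_flux k else 0).
Proof.
move=> k_lt; rewrite mulmx_path_adj inordK // mulrDl /edge_flux.
congr (_ + _); case: ifP; rewrite ?mul0r //.
  by move=> /prednK ->.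
by rewrite mulrAC.
Qed.

End PathAdjacency.

Lemma same_parity_below_pred x k :
  [&& (x <= k)%N, odd x == odd k & x != k] =
  if k is j.+2 then (x <= j)%N && (odd x == odd j) else false.
Proof.
case: k => [|[|k]] /=.
- by case: x.
- by case: x => [|[|x]].
rewrite negbK.
case: (ltngtP x k.+2) => [x_lt|x_gt|->] /=; rewrite ?andbT ?andbF.
- move: x_lt; rewrite ltnS leq_eqVlt ltnS; case: eqP => [-> _ | _ /= ->] //.
  by rewrite ltnn /=; case: (odd k).
- by rewrite leqNgt (ltn_trans (ltnSn k) (ltnW x_gt)).
- by rewrite ltnNge leqnSn.
Qed.

Section AlternatingSquares.
Variables (R : nzRingType) (n : nat) (c : 'cV[R]_n.+1).
Local Notation cv k := (c (inord k) 0).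

Lemma alt_sq_rec k : (k < n.+1)%N ->
  alt_sq c k = (if k is j.+2 then alt_sq c j else 0) + cv k ^+ 2.
Proof.
move=> k_lt; rewrite /alt_sq (bigD1 (inord k)) /= ?inordK ?leqnn ?eqxx //.
rewrite addrC; congr (_ + _).
under eq_bigl => i do
  rewrite -(inj_eq val_inj) /= inordK // -andbA same_parity_below_pred.
by case: k k_lt => [|[|k]] _; rewrite /= ?big_pred0_eq.
Qed.

Definition alt_sq_diff k := alt_sq c k - (if k is j.+1 then alt_sq c j else 0).

Lemma alt_sq_diff0 : alt_sq_diff 0 = cv 0 ^+ 2.
Proof. by rewrite /alt_sq_diff alt_sq_rec // add0r subr0. Qed.

Lemma alt_sq_diffD k : (k < n)%N -> alt_sq_diff k + alt_sq_diff k.+1 = cv k.+1 ^+ 2.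
Proof.
move=> k_lt; rewrite /alt_sq_diff addrC addrA subrK (@alt_sq_rec k.+1 k_lt).
by case: k k_lt => [|k] _; rewrite ?add0r ?subr0 // addrC addKr.
Qed.

End AlternatingSquares.

Section VertexBalance.
Variables (R : fieldType) (m : nat) (c : 'cV[R]_m.+2) (rho : R).
Local Notation cv k := (c (inord k) 0).

Definition flux_balance (F : nat -> R) := forall i, (i < m.+2)%N ->
  (if (0 < i)%N then F i.-1 else 0) + (if (i < m.+1)%N then F i else 0) = rho * cv i ^+ 2.

Lemma flux_balanceP F : rho != 0 ->
  flux_balance F <->
  (forall i, (i < m.+1)%N -> F i = rho * alt_sq_diff c i) /\ alt_sq c m = alt_sq c m.+1.
Proof.
move=> rho_nz; split => [balF | [FE last_eq] [|i] i_lt /=].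
- have FE i : (i < m.+1)%N -> F i = rho * alt_sq_diff c i.
    elim: i => [|i IH] i_lt; first by have := balF 0%N isT; rewrite add0r alt_sq_diff0.
    have := balF i.+1 (ltnW i_lt).
    rewrite /= i_lt -(alt_sq_diffD c (ltnW i_lt)) mulrDr (IH (ltnW i_lt)).
    exact: addrI.
  split; first exact: FE.
  have := balF m.+1 (ltnSn _).
  rewrite ltnn addr0 -(alt_sq_diffD c (ltnSn m)) mulrDr FE //.
  rewrite -{1}[rho * _]addr0 => /addrI/esym/eqP.
  by rewrite mulf_eq0 (negbTE rho_nz) /alt_sq_diff subr_eq0 eq_sym => /eqP.
- by rewrite add0r FE // alt_sq_diff0.
rewrite FE ?(ltnW i_lt) //; case: ifP => [i_lt' | i_ge].
  by rewrite FE // -mulrDr alt_sq_diffD.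
have -> : i = m by lia.
have diff_eq0 : alt_sq_diff c m.+1 = 0 by rewrite /alt_sq_diff last_eq subrr.
by rewrite -(alt_sq_diffD c (ltnSn m)) diff_eq0 !addr0.
Qed.

Lemma path_adj_eigenP w : (forall i, c i 0 != 0) ->
  path_adj m.+2 w *m c = rho *: c <-> flux_balance (edge_flux w c).
Proof.
move=> c_nz; split => [/matrixP eig i i_lt | balF].
  by rewrite -mulmx_path_adj_mul // eig !mxE expr2 mulrA.
apply/matrixP => i j; rewrite ord1 [RHS]mxE; apply: (mulIf (c_nz i)).
have := mulmx_path_adj_mul w c (ltn_ord i); rewrite inord_val => ->.
by rewrite balF ?ltn_ord // inord_val expr2 mulrA.
Qed.

End VertexBalance.

Theorem mainTheorem5 (R : realFieldType) (n : nat) (c : 'cV[R]_n) (rho : R) :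
  (2 <= n)%N ->
  (forall i : 'I_n, 0 < c i 0) ->
  0 < rho ->
  (exists w : nat -> R,
      (forall i : nat, (i < n.-1)%N -> 0 < w i) /\
      path_adj n w *m c = rho *: c)
  <->
  ((forall k : nat, (k.+1 < n.-1)%N -> alt_sq c k < alt_sq c k.+1) /\
   alt_sq c (n.-2) = alt_sq c (n.-1)).
Proof.
case: n c => [|[|m]] c // _ c_pos rho_pos /=.
have c_nz i : c i 0 != 0 := lt0r_neq0 (c_pos i).
have rho_nz : rho != 0 := lt0r_neq0 rho_pos.
split => [[w [w_pos eig]] | [s_lt last_eq]].
- move: eig => /(path_adj_eigenP rho w c_nz)/(flux_balanceP c _ rho_nz) [fluxE last_eq].
  split=> // k k_lt.
  rewrite -subr_gt0 -(pmulr_rgt0 _ rho_pos) -[_ - _]/(alt_sq_diff c k.+1) -fluxE //.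
  by rewrite !mulr_gt0 ?w_pos.
pose w i := rho * alt_sq_diff c i / (c (inord i) 0 * c (inord i.+1) 0).
have diff_pos i : (i < m.+1)%N -> 0 < alt_sq_diff c i.
  by case: i => [|i] i_lt; rewrite ?alt_sq_diff0 ?exprn_gt0 // subr_gt0 s_lt.
exists w; split => [i i_lt | ].
  by rewrite /w divr_gt0 ?mulr_gt0 ?diff_pos.
apply/(path_adj_eigenP rho w c_nz)/(flux_balanceP c _ rho_nz); split=> // i _.
by rewrite /edge_flux /w -mulrA divfK // mulf_neq0.
Qed.
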